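(* Let $R$ and $H$ be hyperdomains, $X=\operatorname{Spec}R$ and $Y=\operatorname{Spec}H$ with their structure sheaves $\mathcal{O}_X,\mathcal{O}_Y$. Then there is a natural bijection \[\operatorname{Hom}(R,H)\cong\operatorname{Hom}(Y,X)\] between homomorphisms of hyperrings $R\to H$ and morphisms of locally hyperringed spaces $(Y,\mathcal{O}_Y)\to(X,\mathcal{O}_X)$; a homomorphism $\varphi$ corresponds to the morphism with underlying map $\mathfrak{p}\mapsto\varphi^{-1}(\mathfrak{p})$, and a morphism to the homomorphism obtained on global sections.
   Context: Hyperring: a set with a hyperoperation $+$ into nonempty subsets (extended to subsets by $A+B=\bigcup a+b$) making $(R,+,0)$ a canonical hypergroup (commutative, associative, unique $0$ with $0+x=\{x\}$, unique $-x$ with $0\in x+(-x)$, $x\in y+z\iff z\in x+(-y)$), and a commutative monoid $(R,\cdot,1)$, with $x(y+z)=xy+xz$, $0x=0$, $0\ne1$. Homomorphisms satisfy $\varphi(a+b)\subseteq\varphi(a)+\varphi(b)$, $\varphi(ab)=\varphi(a)\varphi(b)$. A hyperdomain has no zero-divisors. Hyperideals, primes, $\operatorname{Spec}$ with the Zariski topology and $D(f)$ are as for rings. Localization $T^{-1}R$ at a multiplicative submonoid $T$: pairs modulo $(r_1,t_1)\sim(r_2,t_2)\iff xr_1t_2=xr_2t_1$ for some $x\in T$, with $\frac{r_1}{t_1}+\frac{r_2}{t_2}=\{\frac y{t_1t_2}\mid y\in r_1t_2+t_1r_2\}$; $R_\mathfrak{p}=(R\setminus\mathfrak{p})^{-1}R$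 has a unique maximal hyperideal. The structure sheaf: $\mathcal{O}_X(U)$ is the set of maps $s:U\to\bigsqcup_{\mathfrak{p}\in U}R_\mathfrak{p}$, $s(\mathfrak{p})\in R_\mathfrak{p}$, locally of the form $\mathfrak{q}\mapsto\frac af$ with $f\notin\mathfrak{q}$, with pointwise multiplication and $s+t=\{r\mid r(\mathfrak{p})\in s(\mathfrak{p})+t(\mathfrak{p})\ \forall\mathfrak{p}\}$; for a hyperdomain this is a sheaf of hyperrings with $\mathcal{O}_X(X)\cong R$ and stalks $\mathcal{O}_{X,\mathfrak{p}}\cong R_\mathfrak{p}$. A morphism of locally hyperringed spaces $(Y,\mathcal{O}_Y)\to(X,\mathcal{O}_X)$ is a pair $(f,f^\#)$ of a continuous map $f:Y\to X$ and a morphism of sheaves of hyperrings $f^\#:\mathcal{O}_X\to f_*\mathcal{O}_Y$ (hyperring homomorphisms compatible with restrictions) such that each induced stalk map $\mathcal{O}_{X,f(\mathfrak{p})}\to\mathcal{O}_{Y,\mathfrak{p}}$ is local, i.e. the preimage of the maximal hyperideal is the maximal hyperideal. *)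

From Stdlib Require Import Classical FunctionalExtensionality PropExtensionality.
Set Implicit Arguments.
Unset Strict Implicit.

(* Hyperrings (Krasner-style).  [hadd x y z] means  z \in x + y.       *)
Record hyperring := HyperRing {
  hcar :> Type;
  hadd : hcar -> hcar -> hcar -> Prop;
  hmul : hcar -> hcar -> hcar;
  hzero : hcar;
  hone : hcar;
  hneg : hcar -> hcar;
  hadd_nonempty : forall x y, exists z, hadd x y z;
  hadd_comm : forall x y z, hadd x y z <-> hadd y x z;
  hadd_assoc : forall x y w u,
      (exists v, hadd x y v /\ hadd v w u) <-> (exists v, hadd y w v /\ hadd x v u);
  hadd_0l : forall x z, hadd hzero x z <-> z = x;
  hadd_zero_unique : forall e, (forall x z, hadd e x z <-> z = x) -> e = hzero;
  hadd_negr : forall x, hadd x (hneg x) hzero;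
  hneg_unique : forall x y, hadd x y hzero -> y = hneg x;
  hadd_rev : forall x y z, hadd y z x <-> hadd x (hneg y) z;
  hmul_assoc : forall x y z, hmul x (hmul y z) = hmul (hmul x y) z;
  hmul_comm : forall x y, hmul x y = hmul y x;
  hmul_1l : forall x, hmul hone x = x;
  hmul_distr : forall x y z u,
      (exists w, hadd y z w /\ u = hmul x w) <-> hadd (hmul x y) (hmul x z) u;
  hmul_0l : forall x, hmul hzero x = hzero;
  hzero_neq_one : hzero <> hone
}.

Definition hyperdomain (R : hyperring) : Prop :=
  forall x y : R, hmul x y = hzero R -> x = hzero R \/ y = hzero R.

(* Raw (relational) hyperring-like structures, used for R itself, for  *)
(* rings of sections O_X(U) and for stalks.                            *)
Record rstr := RStr {
  rcar : Type;
  radd : rcar -> rcar -> rcar -> Prop;   (* radd x y z : z \in x + y *)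
  rmul : rcar -> rcar -> rcar -> Prop;   (* rmul x y z : z = x * y *)
  rzero : rcar -> Prop;                  (* rzero z : z = 0 *)
  rone : rcar -> Prop                    (* rone z : z = 1 *)
}.

Definition rstr_of (R : hyperring) : rstr :=
  @RStr (hcar R) (@hadd R) (fun x y z => z = hmul x y)
        (fun z => z = hzero R) (fun z => z = hone R).

Definition is_hom (A B : rstr) (phi : rcar A -> rcar B) : Prop :=
  (forall x y z, @radd A x y z -> @radd B (phi x) (phi y) (phi z)) /\
  (forall x y z, @rmul A x y z -> @rmul B (phi x) (phi y) (phi z)) /\
  (forall z, @rzero A z -> @rzero B (phi z)) /\
  (forall z, @rone A z -> @rone B (phi z)).

Arguments is_hom : clear implicits.

Definition hyperideal (A : rstr) (I : rcar A -> Prop) : Prop :=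
  (forall z, @rzero A z -> I z) /\
  (forall x y z, I x -> I y -> @radd A x y z -> I z) /\
  (forall r x z, I x -> @rmul A r x z -> I z).

Definition proper (A : rstr) (I : rcar A -> Prop) : Prop :=
  forall o, @rone A o -> ~ I o.

Definition maximal_hyperideal (A : rstr) (M : rcar A -> Prop) : Prop :=
  hyperideal M /\ proper M /\
  forall J, hyperideal J -> proper J -> (forall x, M x -> J x) -> forall x, J x -> M x.

Definition prime_hyperideal (R : hyperring) (p : R -> Prop) : Prop :=
  @hyperideal (rstr_of R) p /\ ~ p (hone R) /\
  forall a b, p (hmul a b) -> p a \/ p b.

Definition Spec (R : hyperring) := { p : R -> Prop | prime_hyperideal p }.
Definition pt (R : hyperring) (p : Spec R) : R -> Prop := proj1_sig p.

Definition is_open (R : hyperring) (U : Spec R -> Prop) : Prop :=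
  forall p, U p -> exists f, ~ pt p f /\ forall q, ~ pt q f -> U q.

Section Loc.
Variables (R : hyperring) (p : Spec R).

Definition loc_rel (x y : R * R) : Prop :=
  ~ pt p (snd x) /\ ~ pt p (snd y) /\
  exists u, ~ pt p u /\
    hmul u (hmul (fst x) (snd y)) = hmul u (hmul (fst y) (snd x)).

Definition Loc := { c : R * R -> Prop |
  exists r t, ~ pt p t /\ c = loc_rel (r, t) }.

Definition lrep (c : Loc) (x : R * R) : Prop := proj1_sig c x.

Definition loc_add (c1 c2 c3 : Loc) : Prop :=
  exists r1 t1 r2 t2 y, lrep c1 (r1, t1) /\ lrep c2 (r2, t2) /\
    hadd (hmul r1 t2) (hmul t1 r2) y /\ lrep c3 (y, hmul t1 t2).
Definition loc_mul (c1 c2 c3 : Loc) : Prop :=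
  exists r1 t1 r2 t2, lrep c1 (r1, t1) /\ lrep c2 (r2, t2) /\
    lrep c3 (hmul r1 r2, hmul t1 t2).
Definition loc_zero (c : Loc) : Prop := lrep c (hzero R, hone R).
Definition loc_one (c : Loc) : Prop := lrep c (hone R, hone R).
End Loc.

Section Sheaf.
Variable R : hyperring.

Definition is_locfrac (U : Spec R -> Prop) (s : forall p, U p -> Loc p) : Prop :=
  forall p (hp : U p), exists V, is_open V /\ V p /\ (forall q, V q -> U q) /\
    exists a f, forall q (hq : U q), V q -> ~ pt q f /\ lrep (s q hq) (a, f).

Definition sec (U : Spec R -> Prop) := { s : forall p, U p -> Loc p | is_locfrac s }.
Definition sval (U : Spec R -> Prop) (s : sec U) : forall p, U p -> Loc p := proj1_sig s.
Arguments sval {U} s p h.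

Definition sec_rstr (U : Spec R -> Prop) : rstr :=
  @RStr (sec U)
    (fun s t r => forall p hp, loc_add (sval s p hp) (sval t p hp) (sval r p hp))
    (fun s t r => forall p hp, loc_mul (sval s p hp) (sval t p hp) (sval r p hp))
    (fun s => forall p hp, loc_zero (sval s p hp))
    (fun s => forall p hp, loc_one (sval s p hp)).

Definition restricts (U V : Spec R -> Prop) (s : sec U) (t : sec V) : Prop :=
  forall p (hU : U p) (hV : V p), sval t p hV = sval s p hU.

Definition is_const_sec (r : R) (s : sec (fun _ : Spec R => True)) : Prop :=
  forall p h, lrep (sval s p h) (r, hone R).

Record germ (p : Spec R) := Germ {
  gU : Spec R -> Prop;
  gU_open : is_open gU;
  gU_p : gU p;
  gs : sec gU }.

Definition germ_eq (p : Spec R) (g1 g2 : germ p) : Prop :=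
  exists W, is_open W /\ W p /\ (forall q, W q -> gU g1 q /\ gU g2 q) /\
    forall q h1 h2, W q -> sval (gs g1) q h1 = sval (gs g2) q h2.

Definition Stalk (p : Spec R) := { c : germ p -> Prop | exists g, c = germ_eq g }.

Definition germ_class (p : Spec R) (g : germ p) : Stalk p :=
  exist _ (germ_eq g) (ex_intro _ g eq_refl).

Definition stalk_rstr (p : Spec R) : rstr :=
  @RStr (Stalk p)
    (fun c1 c2 c3 => exists g1 g2 g3,
       proj1_sig c1 g1 /\ proj1_sig c2 g2 /\ proj1_sig c3 g3 /\
       exists W, is_open W /\ W p /\
         (forall q, W q -> gU g1 q /\ gU g2 q /\ gU g3 q) /\
         forall q h1 h2 h3, W q ->
           loc_add (sval (gs g1) q h1) (sval (gs g2) q h2) (sval (gs g3) q h3))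
    (fun c1 c2 c3 => exists g1 g2 g3,
       proj1_sig c1 g1 /\ proj1_sig c2 g2 /\ proj1_sig c3 g3 /\
       exists W, is_open W /\ W p /\
         (forall q, W q -> gU g1 q /\ gU g2 q /\ gU g3 q) /\
         forall q h1 h2 h3, W q ->
           loc_mul (sval (gs g1) q h1) (sval (gs g2) q h2) (sval (gs g3) q h3))
    (fun c => exists g, proj1_sig c g /\
       exists W, is_open W /\ W p /\ (forall q, W q -> gU g q) /\
         forall q h, W q -> loc_zero (sval (gs g) q h))
    (fun c => exists g, proj1_sig c g /\
       exists W, is_open W /\ W p /\ (forall q, W q -> gU g q) /\
         forall q h, W q -> loc_one (sval (gs g) q h)).
End Sheaf.
Arguments sval {R U} s p h.
Arguments gU {R p} g _.
Arguments gU_open {R p} g _ _.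
Arguments gU_p {R p} g.
Arguments gs {R p} g.

Record lhs_morph (R H : hyperring) := LHSMorph {
  mf : Spec H -> Spec R;
  mf_cont : forall U : Spec R -> Prop, is_open U -> is_open (fun q => U (mf q));
  msh : forall U : Spec R -> Prop, is_open U -> sec U -> sec (fun q => U (mf q))
}.
Arguments mf {R H} l _.
Arguments mf_cont {R H} l {U} _ _.
Arguments msh {R H} l {U} _ _.

Section Morph.
Variables (R H : hyperring) (m : lhs_morph R H).

Definition germ_map (q : Spec H) (g : germ (mf m q)) : germ q :=
  @Germ H q (fun q' => gU g (mf m q')) (mf_cont m (gU_open g)) (gU_p g)
        (msh m (gU_open g) (gs g)).

Definition is_morphism : Prop :=
  (forall U (hU : is_open U),
     is_hom (sec_rstr U) (sec_rstr (fun q => U (mf m q))) (msh m hU)) /\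
  (forall U V (hU : is_open U) (hV : is_open V), (forall p, V p -> U p) ->
     forall (s : sec U) (s' : sec V), restricts s s' ->
       restricts (msh m hU s) (msh m hV s')) /\
  (* induced stalk maps are local *)
  (forall q (M : Stalk (mf m q) -> Prop) (N : Stalk q -> Prop),
     maximal_hyperideal (A := stalk_rstr (mf m q)) M ->
     maximal_hyperideal (A := stalk_rstr q) N ->
     forall g : germ (mf m q), M (germ_class g) <-> N (germ_class (germ_map g))).

(* phi : R -> H is the homomorphism induced on global sections,
   via the canonical identifications R = O_X(X), H = O_Y(Y), r |-> r/1 *)
Definition global_hom (phi : R -> H) : Prop :=
  forall (hT : is_open (fun _ : Spec R => True)) (r : R)
         (s : sec (fun _ : Spec R => True)) (s' : sec (fun _ : Spec H => True)),
    is_const_sec r s -> is_const_sec (phi r) s' -> msh m hT s = s'.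
End Morph.

(* A homomorphism [phi] gives the morphism [q |-> phi^-1(q)], [a/f |-> phi a/phi f].
   Conversely the data of a morphism inducing [phi] are forced: the maximal ideal of
   each stalk consists of the germs whose numerator lies in the point, so locality at
   the constant germs [r/1] forces the underlying map to be [q |-> phi^-1(q)], and a
   sheaf homomorphism with [r/1 |-> phi r/1] must send [a/f = (a/1) (f/1)^-1] to
   [phi a/phi f]. The homomorphism on global sections exists because every global
   section of the structure sheaf of a hyperdomain is a constant [r/1]. *)

From Stdlib Require Import Classical FunctionalExtensionality PropExtensionality
  ProofIrrelevance ClassicalEpsilon.
From mathcomp Require classical_sets.
Set Implicit Arguments.
Unset Strict Implicit.

Definition is_chain (T : Type) (F : (T -> Prop) -> Prop) : Prop :=
  forall X Y, F X -> F Y -> (forall x, X x -> Y x) \/ (forall x, Y x -> X x).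

Lemma pred_ext (T : Type) (A B : T -> Prop) : (forall x, A x <-> B x) -> A = B.
Proof.
  intro AB. apply functional_extensionality; intro x.
  apply propositional_extensionality, AB.
Qed.

Lemma zorn_above (T : Type) (P : (T -> Prop) -> Prop) (A0 : T -> Prop) (x0 : T) :
  A0 x0 -> P A0 ->
  (forall F, (forall X, F X -> P X) -> is_chain F -> (exists X, F X) ->
     P (fun x => exists X, F X /\ X x)) ->
  exists A, P A /\ (forall x, A0 x -> A x) /\
    forall B, P B -> (forall x, A x -> B x) -> forall x, B x -> A x.
Proof.
  intros A0x0 PA0 Hunion.
  (* [Zorn_bigcup] also needs the union of the empty chain, hence the empty set in [Q]. *)
  set (Q := fun A : T -> Prop => (forall x, ~ A x) \/ (P A /\ forall x, A0 x -> A x)).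
  destruct (@classical_sets.Zorn_bigcup T Q) as [A [QA Amax]].
  - intros F FQ Ftot.
    destruct (classic (exists X x, F X /\ X x)) as [[X [x [FX Xx]]]|Fempty].
    + right.
      set (F' := fun Y => F Y /\ exists y, Y y).
      assert (F'P : forall Y, F' Y -> P Y /\ forall x, A0 x -> Y x).
      { intros Y [FY [y Yy]]. destruct (FQ Y FY) as [Yempty|HY]; [|exact HY].
        exfalso. exact (Yempty y Yy). }
      replace (classical_sets.bigcup F (fun X => X))
        with (fun x => exists Y, F' Y /\ Y x).
      * split.
        -- apply Hunion.
           ++ intros Y F'Y. exact (proj1 (F'P Y F'Y)).
           ++ intros Y Z [FY _] [FZ _]. exact (Ftot Y Z FY FZ).
           ++ exists X. split; [exact FX|exists x; exact Xx].
        -- intros z A0z. exists X. split; [split; [exact FX|exists x; exact Xx]|].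
           exact (proj2 (F'P X (conj FX (ex_intro _ x Xx))) z A0z).
      * apply pred_ext. intro z. split.
        -- intros [Y [[FY _] Yz]]. exists Y; assumption.
        -- intros [Y FY Yz]. exists Y. split; [split; [exact FY|exists z; exact Yz]|exact Yz].
    + left. intros x [X FX Xx]. apply Fempty. exists X, x. split; assumption.
  - destruct QA as [Aempty|[PA A0A]].
    + exfalso. apply (Amax A0).
      * split; [intros x Ax; exfalso; exact (Aempty x Ax)|].
        intro A0A. exact (Aempty x0 (A0A x0 A0x0)).
      * right. split; [exact PA0|intros x A0x; exact A0x].
    + exists A. split; [exact PA|split; [exact A0A|]].
      intros B PB AB x Bx. apply NNPP. intro nAx.
      apply (Amax B).
      * split; [exact AB|intro BA; exact (nAx (BA x Bx))].
      * right. split; [exact PB|intros y A0y; exact (AB y (A0A y A0y))].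
Qed.

Infix "**" := hmul (at level 40, left associativity).

Section HyperringAlgebra.
Variable R : hyperring.

Lemma hmulr1 (x : R) : x ** hone R = x.
Proof. rewrite hmul_comm. apply hmul_1l. Qed.

Lemma hmulr0 (x : R) : x ** hzero R = hzero R.
Proof. rewrite hmul_comm. apply hmul_0l. Qed.

Lemma hmulCA (x y z : R) : x ** (y ** z) = y ** (x ** z).
Proof. rewrite !hmul_assoc, (hmul_comm x y). reflexivity. Qed.

Lemma hmulAC (x y z : R) : x ** y ** z = x ** z ** y.
Proof. rewrite <- !hmul_assoc, (hmul_comm y z). reflexivity. Qed.

Lemma hmulACA (a b c d : R) : a ** b ** (c ** d) = a ** c ** (b ** d).
Proof. rewrite !hmul_assoc, (hmulAC a b c). reflexivity. Qed.

Lemma hmulrN (x y : R) : x ** hneg y = hneg (x ** y).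
Proof.
  apply hneg_unique, (proj1 (hmul_distr x y (hneg y) (hzero R))).
  exists (hzero R). split; [apply hadd_negr|symmetry; apply hmulr0].
Qed.

Lemma hnegK (x : R) : hneg (hneg x) = x.
Proof. symmetry. apply hneg_unique, hadd_comm, hadd_negr. Qed.

Lemma hmulI : hyperdomain R ->
  forall u a b : R, u <> hzero R -> u ** a = u ** b -> a = b.
Proof.
  intros hd u a b u0 e.
  assert (h0 : hadd (u ** a) (u ** hneg b) (hzero R))
    by (rewrite e, hmulrN; apply hadd_negr).
  destruct (proj2 (hmul_distr u a (hneg b) (hzero R)) h0) as [w [hw ew]].
  destruct (hd _ _ (eq_sym ew)) as [u0' | ->]; [contradiction|].
  rewrite <- (hnegK b), (hneg_unique hw), hnegK. reflexivity.
Qed.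

Lemma hyperideal_mull (I : R -> Prop) (r x : R) :
  @hyperideal (rstr_of R) I -> I x -> I (r ** x).
Proof. intros [_ [_ Imul]] Ix. exact (Imul r x _ Ix eq_refl). Qed.

End HyperringAlgebra.

Section HyperringHom.
Variables R H : hyperring.
Variable phi : R -> H.
Hypothesis hphi : is_hom (rstr_of R) (rstr_of H) phi.

Lemma hom_add x y z : hadd x y z -> hadd (phi x) (phi y) (phi z).
Proof. apply (proj1 hphi). Qed.

Lemma hom_mul x y : phi (x ** y) = phi x ** phi y.
Proof. apply (proj1 (proj2 hphi)). reflexivity. Qed.

Lemma hom0 : phi (hzero R) = hzero H.
Proof. apply (proj1 (proj2 (proj2 hphi))). reflexivity. Qed.

Lemma hom1 : phi (hone R) = hone H.
Proof. apply (proj2 (proj2 (proj2 hphi))). reflexivity. Qed.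

End HyperringHom.

Section PrimeIdeals.
Variables (R : hyperring) (p : Spec R).

Lemma pt0 : pt p (hzero R).
Proof. destruct (proj2_sig p) as [[p0 _] _]. apply p0. reflexivity. Qed.

Lemma pt1 : ~ pt p (hone R).
Proof. exact (proj1 (proj2 (proj2_sig p))). Qed.

Lemma pt_mull (x y : R) : pt p y -> pt p (x ** y).
Proof. apply hyperideal_mull, (proj1 (proj2_sig p)). Qed.

Lemma pt_mulr (x y : R) : pt p x -> pt p (x ** y).
Proof. rewrite hmul_comm. apply pt_mull. Qed.

Lemma pt_add (x y z : R) : pt p x -> pt p y -> hadd x y z -> pt p z.
Proof. destruct (proj2_sig p) as [[_ [padd _]] _]. apply padd. Qed.

Lemma pt_mul_or (x y : R) : pt p (x ** y) -> pt p x \/ pt p y.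
Proof. apply (proj2 (proj2 (proj2_sig p))). Qed.

Lemma npt_mul (x y : R) : ~ pt p x -> ~ pt p y -> ~ pt p (x ** y).
Proof. intros nx ny pxy. destruct (pt_mul_or pxy); auto. Qed.

Lemma npt_neq0 (x : R) : ~ pt p x -> x <> hzero R.
Proof. intros nx ->. exact (nx pt0). Qed.

End PrimeIdeals.

Lemma spec_eq (R : hyperring) (p1 p2 : Spec R) : pt p1 = pt p2 -> p1 = p2.
Proof.
  destruct p1 as [P1 h1], p2 as [P2 h2]. unfold pt; simpl. intros ->.
  f_equal. apply proof_irrelevance.
Qed.

Definition proper_hyperideal (R : hyperring) (A : R -> Prop) : Prop :=
  @hyperideal (rstr_of R) A /\ ~ A (hone R).

Section Krull.
Variable R : hyperring.

Lemma chain_union_proper_hyperideal (F : (R -> Prop) -> Prop) :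
  (forall X, F X -> proper_hyperideal X) -> is_chain F -> (exists X, F X) ->
  proper_hyperideal (fun x => exists X, F X /\ X x).
Proof.
  intros FP Fchain [X0 FX0]. split; [split; [|split]|]; simpl.
  - intros z ->. exists X0. split; [exact FX0|].
    destruct (FP X0 FX0) as [[X00 _] _]. exact (X00 _ eq_refl).
  - intros x y z [X [FX Xx]] [Y [FY Yy]] xyz.
    destruct (Fchain X Y FX FY) as [XY|YX].
    + exists Y. split; [exact FY|].
      destruct (FP Y FY) as [[_ [Yadd _]] _]. exact (Yadd x y z (XY x Xx) Yy xyz).
    + exists X. split; [exact FX|].
      destruct (FP X FX) as [[_ [Xadd _]] _]. exact (Xadd x y z Xx (YX y Yy) xyz).
  - intros r x z [X [FX Xx]] ->. exists X. split; [exact FX|].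
    exact (hyperideal_mull r (proj1 (FP X FX)) Xx).
  - intros [X [FX X1]]. exact (proj2 (FP X FX) X1).
Qed.

(* If [a b] lies in [A] but [b] does not, the colon ideal [(A : b)] is a proper
   ideal containing [A] and [a]. *)
Lemma maximal_proper_hyperideal_prime (A : R -> Prop) :
  proper_hyperideal A ->
  (forall B, proper_hyperideal B -> (forall x, A x -> B x) -> forall x, B x -> A x) ->
  prime_hyperideal A.
Proof.
  intros [Aideal A1] Amax. split; [exact Aideal|split; [exact A1|]].
  intros a b Aab. apply NNPP. intros [na nb]%not_or_and.
  destruct Aideal as [A0 [Aadd Amul]].
  set (K := fun x => A (x ** b)).
  apply na, (Amax K); [|intros x Ax; exact (Amul b x _ Ax (hmul_comm x b))|exact Aab].
  split; [split; [|split]|]; simpl; unfold K.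
  - intros z ->. rewrite hmul_0l. exact (A0 _ eq_refl).
  - intros x y z Ax Ay xyz.
    assert (bxyz : hadd (b ** x) (b ** y) (b ** z))
      by (apply (proj1 (hmul_distr b x y (b ** z))); exists z; auto).
    rewrite !(hmul_comm b) in bxyz. exact (Aadd _ _ _ Ax Ay bxyz).
  - intros r x z Ax ->. rewrite <- hmul_assoc. exact (Amul r _ _ Ax eq_refl).
  - rewrite hmul_1l. exact nb.
Qed.

Lemma exists_prime_above (J : R -> Prop) :
  proper_hyperideal J -> exists q : Spec R, forall x, J x -> pt q x.
Proof.
  intros PJ.
  assert (J0 : J (hzero R)) by (destruct PJ as [[J0 _] _]; exact (J0 _ eq_refl)).
  destruct (zorn_above J0 PJ chain_union_proper_hyperideal) as [A [PA [JA Amax]]].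
  exists (exist _ A (maximal_proper_hyperideal_prime PA Amax)). exact JA.
Qed.

End Krull.

Section Localization.
Variable R : hyperring.
Hypothesis hd : hyperdomain R.
Variable p : Spec R.

(* In a domain the factor [u] in [loc_rel] can be cancelled. *)
Definition frac_eq (x y : R * R) : Prop :=
  ~ pt p (snd x) /\ ~ pt p (snd y) /\ fst x ** snd y = fst y ** snd x.

Lemma loc_relE x y : loc_rel p x y <-> frac_eq x y.
Proof.
  unfold loc_rel, frac_eq. split.
  - intros [nx [ny [u [nu e]]]]. repeat split; auto.
    exact (hmulI hd (npt_neq0 nu) e).
  - intros [nx [ny e]]. repeat split; auto.
    exists (hone R). split; [apply pt1|rewrite e; reflexivity].
Qed.

Lemma frac_eq_refl x : ~ pt p (snd x) -> frac_eq x x.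
Proof. unfold frac_eq. auto. Qed.

Lemma frac_eq_sym x y : frac_eq x y -> frac_eq y x.
Proof. unfold frac_eq. intros [nx [ny e]]. auto. Qed.

Lemma frac_eq_trans x y z : frac_eq x y -> frac_eq y z -> frac_eq x z.
Proof.
  destruct x as [x1 x2], y as [y1 y2], z as [z1 z2]. unfold frac_eq; simpl.
  intros [nx [ny e1]] [_ [nz e2]]. repeat split; auto.
  apply (hmulI hd (npt_neq0 ny)).
  rewrite hmulCA, hmul_assoc, e1, hmulAC, e2, hmulAC, hmul_comm. reflexivity.
Qed.

Lemma frac_eq_const a b : frac_eq (a, hone R) (b, hone R) <-> a = b.
Proof.
  unfold frac_eq; simpl. rewrite !hmulr1. split; [tauto|].
  intros ->. repeat split; apply pt1.
Qed.

Lemma lrep_exists (c : Loc p) : exists r t, lrep c (r, t).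
Proof.
  destruct c as [c [r [t [nt ->]]]]. exists r, t.
  apply loc_relE, frac_eq_refl. exact nt.
Qed.

Lemma lrep_iff (c : Loc p) x y : lrep c x -> (lrep c y <-> frac_eq x y).
Proof.
  destruct c as [c [r [t [nt ->]]]]. unfold lrep; simpl. rewrite !loc_relE.
  intro cx. split; intro h.
  - exact (frac_eq_trans (frac_eq_sym cx) h).
  - exact (frac_eq_trans cx h).
Qed.

Lemma lrep_frac_eq (c : Loc p) x y : lrep c x -> lrep c y -> frac_eq x y.
Proof. intros cx. apply (lrep_iff y cx). Qed.

Lemma lrep_den (c : Loc p) x : lrep c x -> ~ pt p (snd x).
Proof. intro cx. exact (proj1 (lrep_frac_eq cx cx)). Qed.

Lemma loc_eq (c1 c2 : Loc p) x : lrep c1 x -> lrep c2 x -> c1 = c2.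
Proof.
  intros c1x c2x.
  assert (E : proj1_sig c1 = proj1_sig c2).
  { apply pred_ext. intro y.
    change (lrep c1 y <-> lrep c2 y). rewrite (lrep_iff y c1x), (lrep_iff y c2x). tauto. }
  destruct c1 as [P1 h1], c2 as [P2 h2]. simpl in E. subst P2.
  f_equal. apply proof_irrelevance.
Qed.

Definition lclass (r t : R) (nt : ~ pt p t) : Loc p :=
  exist _ (loc_rel p (r, t)) (ex_intro _ r (ex_intro _ t (conj nt eq_refl))).

Lemma lclass_rep r t nt : lrep (@lclass r t nt) (r, t).
Proof. apply loc_relE, frac_eq_refl. exact nt. Qed.

Lemma lrep_num_pt (c : Loc p) a f a' f' :
  lrep c (a, f) -> lrep c (a', f') -> pt p a -> pt p a'.
Proof.
  intros h h' pa. destruct (lrep_frac_eq h h') as [nf [nf' e]]. simpl in *.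
  assert (pa'f : pt p (a' ** f)) by (rewrite <- e; apply pt_mulr, pa).
  destruct (pt_mul_or pa'f); tauto.
Qed.

Lemma loc_mulE (c1 c2 c3 : Loc p) x1 x2 : lrep c1 x1 -> lrep c2 x2 ->
  (loc_mul c1 c2 c3 <-> lrep c3 (fst x1 ** fst x2, snd x1 ** snd x2)).
Proof.
  intros c1x c2x. split.
  - intros [r1 [t1 [r2 [t2 [k1 [k2 k3]]]]]].
    apply (proj2 (lrep_iff _ k3)).
    destruct (lrep_frac_eq k1 c1x) as [n1 [n1' e1]].
    destruct (lrep_frac_eq k2 c2x) as [n2 [n2' e2]].
    destruct x1 as [x11 x12], x2 as [x21 x22]; simpl in *.
    repeat split; simpl; try (apply npt_mul; assumption).
    rewrite hmulACA, e1, e2, hmulACA. reflexivity.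
  - destruct x1 as [x11 x12], x2 as [x21 x22]. intro c3x.
    exists x11, x12, x21, x22. auto.
Qed.

Lemma loc_mul_constE (c1 c2 c3 : Loc p) a b c :
  lrep c1 (a, hone R) -> lrep c2 (b, hone R) -> lrep c3 (c, hone R) ->
  (loc_mul c1 c2 c3 <-> c = a ** b).
Proof.
  intros c1a c2b c3c. rewrite (loc_mulE _ c1a c2b), (lrep_iff _ c3c); simpl.
  rewrite hmul_1l, frac_eq_const. split; auto.
Qed.

(* Both sides of the sum over the common denominator [t1 t2] are multiples of
   [t1 t2], so distributivity and cancellation recover [a + b]. *)
Lemma loc_add_constE (c1 c2 c3 : Loc p) a b c :
  lrep c1 (a, hone R) -> lrep c2 (b, hone R) -> lrep c3 (c, hone R) ->
  (loc_add c1 c2 c3 <-> hadd a b c).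
Proof.
  intros c1a c2b c3c. split.
  - intros [r1 [t1 [r2 [t2 [y [k1 [k2 [ky k3]]]]]]]].
    destruct (lrep_frac_eq c1a k1) as [_ [n1 e1]].
    destruct (lrep_frac_eq c2b k2) as [_ [n2 e2]].
    destruct (lrep_frac_eq c3c k3) as [_ [n3 e3]]. simpl in *.
    rewrite hmulr1 in e1, e2, e3. subst r1 r2 y.
    assert (Ea : a ** t1 ** t2 = t1 ** t2 ** a) by (rewrite <- hmul_assoc; apply hmul_comm).
    assert (Eb : t1 ** (b ** t2) = t1 ** t2 ** b) by (rewrite (hmul_comm b); apply hmul_assoc).
    rewrite Ea, Eb in ky.
    destruct (proj2 (hmul_distr _ _ _ _) ky) as [w [hw ew]].
    replace c with w; [exact hw|].
    apply (hmulI hd (npt_neq0 (npt_mul n1 n2))).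
    rewrite <- ew. apply hmul_comm.
  - intro hc. exists a, (hone R), b, (hone R), c. repeat split; auto.
    + rewrite hmulr1, hmul_1l. exact hc.
    + rewrite hmul_1l. exact c3c.
Qed.

End Localization.

Section StructureSheaf.
Variable R : hyperring.
Hypothesis hd : hyperdomain R.

Lemma open_setT : is_open (fun _ : Spec R => True).
Proof. intros p _. exists (hone R). split; [apply pt1|auto]. Qed.

Lemma open_and (U V : Spec R -> Prop) :
  is_open U -> is_open V -> is_open (fun q => U q /\ V q).
Proof.
  intros hU hV p [Up Vp].
  destruct (hU p Up) as [f [nf Df]], (hV p Vp) as [g [ng Dg]].
  exists (f ** g). split; [apply npt_mul; assumption|].
  intros q nfg. split; [apply Df|apply Dg]; intro h; apply nfg;
    [apply pt_mulr|apply pt_mull]; exact h.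
Qed.

Lemma open_D (f : R) : is_open (fun q : Spec R => ~ pt q f).
Proof. intros p np. exists f. auto. Qed.

Lemma sec_ext (U : Spec R -> Prop) (s t : sec U) :
  (forall p h, sval s p h = sval t p h) -> s = t.
Proof.
  destruct s as [s hs], t as [t ht]. unfold sval; simpl. intro E.
  assert (s = t) as <-.
  { apply functional_extensionality_dep; intro p.
    apply functional_extensionality; intro h. apply E. }
  f_equal. apply proof_irrelevance.
Qed.

Lemma sval_irr (U : Spec R -> Prop) (s : sec U) q (h1 h2 : U q) :
  sval s q h1 = sval s q h2.
Proof. rewrite (proof_irrelevance _ h1 h2). reflexivity. Qed.

Definition secfrac (U : Spec R -> Prop) (hU : is_open U) (a f : R)
    (nf : forall p, U p -> ~ pt p f) : sec U.
Proof.
  refine (exist _ (fun p h => @lclass R p a f (nf p h)) _).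
  intros p Up. exists U. repeat split; auto.
  exists a, f. intros q Uq _. split; [auto|apply lclass_rep, hd].
Defined.

Lemma secfrac_rep (U : Spec R -> Prop) (hU : is_open U) a f nf p h :
  lrep (sval (@secfrac U hU a f nf) p h) (a, f).
Proof. apply lclass_rep, hd. Qed.

Definition constsec (r : R) : sec (fun _ : Spec R => True) :=
  @secfrac _ open_setT r (hone R) (fun p _ => @pt1 R p).

Lemma constsec_const r : is_const_sec r (constsec r).
Proof. intros p h. apply secfrac_rep. Qed.

Lemma const_sec_unique r s : is_const_sec r s -> s = constsec r.
Proof.
  intro hs. apply sec_ext. intros p h.
  exact (loc_eq hd (hs p h) (constsec_const r p h)).
Qed.

Section Stalk.
Variable p : Spec R.

Definition gval (g : germ p) : Loc p := sval (gs g) p (gU_p g).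

Definition germ_vanishes (g : germ p) : Prop :=
  exists a f, lrep (gval g) (a, f) /\ pt p a.

Lemma germ_vanishesE (g : germ p) a f :
  lrep (gval g) (a, f) -> (germ_vanishes g <-> pt p a).
Proof.
  intro ga. split.
  - intros [a' [f' [ga' pa']]]. exact (lrep_num_pt hd ga' ga pa').
  - intro pa. exists a, f. auto.
Qed.

Lemma germ_eq_refl (g : germ p) : germ_eq g g.
Proof.
  exists (gU g). repeat split; auto using gU_p.
  - apply (gU_open g).
  - intros. apply sval_irr.
Qed.

Lemma germ_eq_sym (g1 g2 : germ p) : germ_eq g1 g2 -> germ_eq g2 g1.
Proof.
  intros [W [hW [Wp [WU E]]]]. exists W. repeat split; auto; try apply WU; auto.
  intros. symmetry. auto.
Qed.

Lemma germ_eq_trans (g1 g2 g3 : germ p) :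
  germ_eq g1 g2 -> germ_eq g2 g3 -> germ_eq g1 g3.
Proof.
  intros [W [hW [Wp [WU E]]]] [W' [hW' [Wp' [WU' E']]]].
  exists (fun q => W q /\ W' q). split; [apply open_and; assumption|].
  split; [split; assumption|]. split.
  - intros q [Wq W'q]. exact (conj (proj1 (WU q Wq)) (proj2 (WU' q W'q))).
  - intros q h1 h3 [Wq W'q]. rewrite (E q h1 (proj2 (WU q Wq)) Wq). auto.
Qed.

Lemma germ_eq_gval (g1 g2 : germ p) : germ_eq g1 g2 -> gval g1 = gval g2.
Proof. intros [W [_ [Wp [_ E]]]]. apply E, Wp. Qed.

Lemma stalk_germ_eq (c : Stalk p) g1 g2 :
  proj1_sig c g1 -> proj1_sig c g2 -> germ_eq g1 g2.
Proof.
  destruct c as [P [g0 ->]]. simpl. intros h1 h2.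
  exact (germ_eq_trans (germ_eq_sym h1) h2).
Qed.

Lemma stalk_germ_class (c : Stalk p) g : proj1_sig c g -> c = germ_class g.
Proof.
  intro cg. destruct c as [P [g0 EP]]. unfold germ_class.
  assert (P = germ_eq g) as ->.
  { subst P. apply pred_ext. intro g'. simpl in cg. split; intro h.
    - exact (germ_eq_trans (germ_eq_sym cg) h).
    - exact (germ_eq_trans cg h). }
  f_equal. apply proof_irrelevance.
Qed.

Lemma stalk_germ_class_exists (c : Stalk p) : exists g, c = germ_class g.
Proof.
  destruct (proj2_sig c) as [g Ec]. exists g.
  apply stalk_germ_class. rewrite Ec. apply germ_eq_refl.
Qed.

Definition vanishing_germs (c : Stalk p) : Prop :=
  exists g, proj1_sig c g /\ germ_vanishes g.

Lemma vanishing_germs_mem (c : Stalk p) g :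
  vanishing_germs c -> proj1_sig c g -> germ_vanishes g.
Proof.
  intros [g' [cg' [a [f [ga pa]]]]] cg. exists a, f. split; [|exact pa].
  rewrite <- (germ_eq_gval (stalk_germ_eq cg' cg)). exact ga.
Qed.

Lemma vanishing_germs_class g : vanishing_germs (germ_class g) <-> germ_vanishes g.
Proof.
  split.
  - intro h. exact (vanishing_germs_mem h (germ_eq_refl g)).
  - intro h. exists g. split; [apply germ_eq_refl|exact h].
Qed.

Lemma vanishing_germs_ideal : @hyperideal (stalk_rstr p) vanishing_germs.
Proof.
  split; [|split]; simpl.
  - intros c [g [cg [W [_ [Wp [_ g0]]]]]]. exists g. split; [exact cg|].
    exists (hzero R), (hone R). split; [exact (g0 p (gU_p g) Wp)|apply pt0].
  - intros x y z vx vy [g1 [g2 [g3 [xg1 [yg2 [zg3 [W [_ [Wp [_ gadd]]]]]]]]]].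
    exists g3. split; [exact zg3|].
    destruct (gadd p (gU_p g1) (gU_p g2) (gU_p g3) Wp)
      as [r1 [t1 [r2 [t2 [y' [k1 [k2 [ky k3]]]]]]]].
    exists y', (t1 ** t2). split; [exact k3|].
    refine (pt_add _ _ ky).
    + exact (pt_mulr _ (proj1 (germ_vanishesE k1) (vanishing_germs_mem vx xg1))).
    + exact (pt_mull _ (proj1 (germ_vanishesE k2) (vanishing_germs_mem vy yg2))).
  - intros r x z vx [g1 [g2 [g3 [_ [xg2 [zg3 [W [_ [Wp [_ gmul]]]]]]]]]].
    exists g3. split; [exact zg3|].
    destruct (gmul p (gU_p g1) (gU_p g2) (gU_p g3) Wp)
      as [r1 [t1 [r2 [t2 [k1 [k2 k3]]]]]].
    exists (r1 ** r2), (t1 ** t2). split; [exact k3|].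
    exact (pt_mull _ (proj1 (germ_vanishesE k2) (vanishing_germs_mem vx xg2))).
Qed.

Lemma vanishing_germs_proper : @proper (stalk_rstr p) vanishing_germs.
Proof.
  intros o [g [og [W [_ [Wp [_ g1]]]]]] vo.
  exact (pt1 (proj1 (germ_vanishesE (g1 p (gU_p g) Wp)) (vanishing_germs_mem vo og))).
Qed.

(* Near [p] the germ is [a0/f0] with [a0] outside [p]; on [V /\ D(a0)] the
   fraction [f0/a0] inverts it. *)
Lemma nonvanishing_germ_invertible (g : germ p) : ~ germ_vanishes g ->
  exists gi g1, @rmul (stalk_rstr p) (germ_class gi) (germ_class g) (germ_class g1) /\
                @rone (stalk_rstr p) (germ_class g1).
Proof.
  intro ng.
  destruct (proj2_sig (gs g) p (gU_p g)) as [V [hV [Vp [VU [a0 [f0 Hg]]]]]].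
  assert (na0 : ~ pt p a0).
  { intro pa0. apply ng. exists a0, f0. split; [exact (proj2 (Hg p (gU_p g) Vp))|exact pa0]. }
  set (W := fun q => V q /\ ~ pt q a0).
  assert (hW : is_open W) by (apply open_and; [exact hV|apply open_D]).
  assert (Wp : W p) by (split; assumption).
  set (gi := @Germ R p W hW Wp (@secfrac W hW f0 a0 (fun q Wq => proj2 Wq))).
  set (g1 := @Germ R p W hW Wp (@secfrac W hW (hone R) (hone R) (fun q _ => @pt1 R q))).
  exists gi, g1. split.
  - exists gi, g, g1. do 3 (split; [apply germ_eq_refl|]).
    exists W. split; [exact hW|]. split; [exact Wp|]. split.
    + intros q Wq. split; [exact Wq|split; [apply VU, (proj1 Wq)|exact Wq]].
    + intros q h1 h2 h3 [Vq na0q].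
      destruct (Hg q h2 Vq) as [nf0 gq].
      apply (proj2 (loc_mulE hd _ (secfrac_rep hW f0 (fun q Wq => proj2 Wq) h1) gq)); simpl.
      apply (proj2 (lrep_iff hd _ (secfrac_rep hW (hone R) (fun q _ => @pt1 R q) h3))).
      unfold frac_eq; simpl. repeat split; try apply pt1; try (apply npt_mul; assumption).
      rewrite hmul_1l, hmulr1. apply hmul_comm.
  - exists g1. split; [apply germ_eq_refl|].
    exists W. split; [exact hW|]. split; [exact Wp|]. split.
    + intros q Wq. exact Wq.
    + intros q h _. apply secfrac_rep.
Qed.

Lemma ideal_nonvanishing_germ_not_proper (g : germ p) : ~ germ_vanishes g ->
  forall J, @hyperideal (stalk_rstr p) J -> J (germ_class g) -> ~ @proper (stalk_rstr p) J.
Proof.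
  intros ng J [_ [_ Jmul]] Jg Jproper.
  destruct (nonvanishing_germ_invertible ng) as [gi [g1 [gig g1one]]].
  exact (Jproper _ g1one (Jmul _ _ _ Jg gig)).
Qed.

Lemma vanishing_germs_maximal : @maximal_hyperideal (stalk_rstr p) vanishing_germs.
Proof.
  split; [apply vanishing_germs_ideal|split; [apply vanishing_germs_proper|]].
  intros J Jideal Jproper _ c Jc. destruct (stalk_germ_class_exists c) as [g ->].
  apply vanishing_germs_class, NNPP. intro ng.
  exact (ideal_nonvanishing_germ_not_proper ng Jideal Jc Jproper).
Qed.

Lemma maximal_stalk_idealE (M : Stalk p -> Prop) :
  @maximal_hyperideal (stalk_rstr p) M -> forall g, M (germ_class g) <-> germ_vanishes g.
Proof.
  intros [Mideal [Mproper Mmax]].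
  assert (MV : forall g, M (germ_class g) -> germ_vanishes g).
  { intros g Mg. apply NNPP. intro ng.
    exact (ideal_nonvanishing_germ_not_proper ng Mideal Mg Mproper). }
  intro g. split; [apply MV|]. intro vg.
  apply (Mmax _ vanishing_germs_ideal vanishing_germs_proper).
  - intros c Mc. destruct (stalk_germ_class_exists c) as [g' ->].
    apply vanishing_germs_class, MV, Mc.
  - apply vanishing_germs_class, vg.
Qed.

End Stalk.
End StructureSheaf.

Section GlobalSections.
Variable R : hyperring.
Hypothesis hd : hyperdomain R.

Lemma zero_ideal_prime : prime_hyperideal (fun x : R => x = hzero R).
Proof.
  split; [split; [|split]|split]; simpl.
  - intros z ez. exact ez.
  - intros x y z -> -> xyz. exact (proj1 (hadd_0l _ _) xyz).
  - intros r x z -> ->. apply hmulr0.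
  - intro e. exact (hzero_neq_one (eq_sym e)).
  - exact hd.
Defined.

Definition generic_point : Spec R := exist _ _ zero_ideal_prime.

Lemma open_generic (V : Spec R -> Prop) q : is_open V -> V q -> V generic_point.
Proof.
  intros hV Vq. destruct (hV q Vq) as [f [nf Df]]. apply Df.
  intros ->. exact (nf (pt0 q)).
Qed.

Lemma denominator_ideal (a f : R) :
  @hyperideal (rstr_of R) (fun d => exists r, d ** a = r ** f).
Proof.
  split; [|split]; simpl.
  - intros z ->. exists (hzero R). rewrite !hmul_0l. reflexivity.
  - intros x y z [r1 e1] [r2 e2] xyz.
    assert (axyz : hadd (a ** x) (a ** y) (a ** z))
      by (apply (proj1 (hmul_distr a x y (a ** z))); exists z; auto).
    rewrite !(hmul_comm a), e1, e2, !(hmul_comm _ f) in axyz.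
    destruct (proj2 (hmul_distr _ _ _ _) axyz) as [w [_ ew]].
    exists w. rewrite ew. apply hmul_comm.
  - intros r x z [r1 e1] ->. exists (r ** r1). rewrite <- hmul_assoc, e1. apply hmul_assoc.
Qed.

(* A global section [s] agrees with [a/f] at the generic point; each of its local
   fractions [aq/fq] does too, since every nonempty open contains the generic
   point. Hence the denominators [fq] lie in the ideal of those [d] with
   [d a] in [(f)], which meets every prime's complement and so contains [1]. *)
Lemma global_sec_const (s : sec (fun _ : Spec R => True)) : exists r, is_const_sec r s.
Proof.
  destruct (lrep_exists hd (sval s generic_point I)) as [a [f sa]].
  assert (f0 : f <> hzero R) by exact (lrep_den hd sa).
  assert (local : forall q : Spec R, exists aq fq,
             ~ pt q fq /\ lrep (sval s q I) (aq, fq) /\ aq ** f = a ** fq).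
  { intro q. destruct (proj2_sig s q I) as [V [hV [Vq [_ [aq [fq Hs]]]]]].
    destruct (Hs q I Vq) as [nfq sq].
    destruct (lrep_frac_eq hd sa (proj2 (Hs _ I (open_generic hV Vq)))) as [_ [_ e]].
    exists aq, fq. auto. }
  assert (J1 : exists r, hone R ** a = r ** f).
  { apply NNPP. intro nJ1.
    destruct (exists_prime_above (conj (denominator_ideal a f) nJ1)) as [q Jq].
    destruct (local q) as [aq [fq [nfq [_ e]]]].
    apply nfq, Jq. exists aq. rewrite e. apply hmul_comm. }
  destruct J1 as [r er]. rewrite hmul_1l in er.
  exists r. intros q [].
  destruct (local q) as [aq [fq [nfq [sq e]]]].
  apply (proj2 (lrep_iff hd _ sq)).
  unfold frac_eq; simpl. split; [exact nfq|split; [apply pt1|]].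
  rewrite hmulr1. apply (hmulI hd f0).
  rewrite hmul_comm, e, er, hmulAC, hmul_comm. reflexivity.
Qed.

End GlobalSections.

Section SpecOfHom.
Variables R H : hyperring.
Hypothesis hdR : hyperdomain R.
Hypothesis hdH : hyperdomain H.
Variable phi : R -> H.
Hypothesis hphi : is_hom (rstr_of R) (rstr_of H) phi.

Lemma comap_prime (q : Spec H) : prime_hyperideal (fun r => pt q (phi r)).
Proof.
  split; [split; [|split]|split]; simpl.
  - intros z ->. rewrite (hom0 hphi). apply pt0.
  - intros x y z qx qy xyz. exact (pt_add qx qy (hom_add hphi xyz)).
  - intros r x z qx ->. rewrite (hom_mul hphi). apply pt_mull, qx.
  - rewrite (hom1 hphi). apply pt1.
  - intros a b qab. rewrite (hom_mul hphi) in qab. exact (pt_mul_or qab).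
Qed.

Definition comap (q : Spec H) : Spec R := exist _ _ (comap_prime q).

Lemma frac_eq_map (p : Spec R) (q : Spec H) (x y : R * R) :
  (forall r, pt p r <-> pt q (phi r)) -> frac_eq p x y ->
  frac_eq q (phi (fst x), phi (snd x)) (phi (fst y), phi (snd y)).
Proof.
  intros pq [nx [ny e]]. unfold frac_eq; simpl. rewrite <- !pq.
  repeat split; auto. rewrite <- !(hom_mul hphi), e. reflexivity.
Qed.

Lemma comap_open (U : Spec R -> Prop) : is_open U -> is_open (fun q => U (comap q)).
Proof.
  intros hU q Uq. destruct (hU (comap q) Uq) as [f [nf Df]].
  exists (phi f). split; [exact nf|]. intros q' nq'. apply Df, nq'.
Qed.

Section LocMap.
Variable q : Spec H.

Lemma loc_map_subproof (c : Loc (comap q)) : exists x, lrep c x.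
Proof. destruct (lrep_exists hdR c) as [r [t h]]. exists (r, t). exact h. Qed.

Definition loc_map (c : Loc (comap q)) : Loc q :=
  let x := proj1_sig (constructive_indefinite_description _ (loc_map_subproof c)) in
  @lclass H q (phi (fst x)) (phi (snd x))
    (lrep_den hdR (proj2_sig (constructive_indefinite_description _ (loc_map_subproof c)))).

Lemma loc_map_rep (c : Loc (comap q)) r t : lrep c (r, t) -> lrep (loc_map c) (phi r, phi t).
Proof.
  intro crt. unfold loc_map.
  destruct (constructive_indefinite_description _ (loc_map_subproof c)) as [[x1 x2] cx].
  simpl. apply (proj2 (lrep_iff hdH _ (lclass_rep hdH _ (lrep_den hdR cx)))).
  exact (@frac_eq_map (comap q) q _ _ (fun r => iff_refl _) (lrep_frac_eq hdR cx crt)).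
Qed.

Lemma loc_map_add (c1 c2 c3 : Loc (comap q)) :
  loc_add c1 c2 c3 -> loc_add (loc_map c1) (loc_map c2) (loc_map c3).
Proof.
  intros [r1 [t1 [r2 [t2 [y [k1 [k2 [ky k3]]]]]]]].
  exists (phi r1), (phi t1), (phi r2), (phi t2), (phi y).
  split; [apply loc_map_rep, k1|]. split; [apply loc_map_rep, k2|].
  split; [rewrite <- !(hom_mul hphi); apply (hom_add hphi), ky|].
  rewrite <- (hom_mul hphi). apply loc_map_rep, k3.
Qed.

Lemma loc_map_mul (c1 c2 c3 : Loc (comap q)) :
  loc_mul c1 c2 c3 -> loc_mul (loc_map c1) (loc_map c2) (loc_map c3).
Proof.
  intros [r1 [t1 [r2 [t2 [k1 [k2 k3]]]]]].
  exists (phi r1), (phi t1), (phi r2), (phi t2).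
  split; [apply loc_map_rep, k1|]. split; [apply loc_map_rep, k2|].
  rewrite <- !(hom_mul hphi). apply loc_map_rep, k3.
Qed.

End LocMap.

Definition sec_map (U : Spec R -> Prop) (hU : is_open U) (s : sec U) :
    sec (fun q => U (comap q)).
Proof.
  refine (exist _ (fun q h => loc_map (sval s (comap q) h)) _).
  intros q Uq. destruct (proj2_sig s (comap q) Uq) as [V [hV [Vq [VU [a [f Hs]]]]]].
  exists (fun q' => V (comap q')).
  split; [apply comap_open, hV|]. split; [exact Vq|]. split; [intros q' h; apply VU, h|].
  exists (phi a), (phi f). intros q' Uq' Vq'. destruct (Hs _ Uq' Vq') as [nf sf].
  split; [exact nf|apply loc_map_rep, sf].
Defined.

Definition spec_morph : lhs_morph R H := @LHSMorph R H comap comap_open sec_map.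

Lemma spec_morph_is_morphism : is_morphism spec_morph.
Proof.
  split; [|split].
  - intros U hU. split; [|split; [|split]]; simpl.
    + intros s t r h q Uq. apply loc_map_add, h.
    + intros s t r h q Uq. apply loc_map_mul, h.
    + intros s h q Uq. unfold loc_zero. rewrite <- (hom0 hphi), <- (hom1 hphi).
      apply loc_map_rep, h.
    + intros s h q Uq. unfold loc_one. rewrite <- (hom1 hphi). apply loc_map_rep, h.
  - intros U V hU hV VU s s' ss' q Uq Vq. simpl. rewrite (ss' (comap q) Uq Vq). reflexivity.
  - intros q M N hM hN g.
    rewrite (maximal_stalk_idealE hdR hM g), (maximal_stalk_idealE hdH hN (germ_map g)).
    destruct (lrep_exists hdR (gval g)) as [a [f ga]].
    assert (ga' : lrep (gval (germ_map g)) (phi a, phi f)) by exact (loc_map_rep ga).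
    rewrite (germ_vanishesE hdR ga), (germ_vanishesE hdH ga'). reflexivity.
Qed.

Lemma spec_morph_global : global_hom spec_morph phi.
Proof.
  intros hT r s s' sr s'r. apply sec_ext. intros q h. simpl.
  apply (loc_eq hdH (x := (phi r, hone H))); [|apply s'r].
  rewrite <- (hom1 hphi). apply loc_map_rep, sr.
Qed.

End SpecOfHom.

Section HomOfMorphism.
Variables R H : hyperring.
Hypothesis hdR : hyperdomain R.
Hypothesis hdH : hyperdomain H.
Variable phi : R -> H.
Hypothesis hphi : is_hom (rstr_of R) (rstr_of H) phi.
Variable m : lhs_morph R H.
Hypothesis hm : is_morphism m.
Hypothesis hg : global_hom m phi.

Lemma msh_constsec r : msh m (@open_setT R) (constsec hdR r) = constsec hdH (phi r).
Proof. apply (hg (@open_setT R) (r := r)); apply constsec_const. Qed.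

(* Locality of the stalk map at [q], tested on the germ of the constant [r]. *)
Lemma mf_comap q : forall r, pt (mf m q) r <-> pt q (phi r).
Proof.
  intro r.
  set (g := @Germ R (mf m q) (fun _ => True) (@open_setT R) I (constsec hdR r)).
  pose proof (proj2 (proj2 hm) q _ _ (vanishing_germs_maximal hdR (mf m q))
                (vanishing_germs_maximal hdH q) g) as local.
  rewrite !vanishing_germs_class in local.
  assert (gr : lrep (gval g) (r, hone R)) by apply constsec_const.
  assert (gr' : lrep (gval (germ_map g)) (phi r, hone H)).
  { change (lrep (sval (msh m (@open_setT R) (constsec hdR r)) q I) (phi r, hone H)).
    rewrite msh_constsec. apply constsec_const. }
  rewrite (germ_vanishesE hdR gr), (germ_vanishesE hdH gr') in local. exact local.
Qed.

Lemma msh_const_rep (V : Spec R -> Prop) (hV : is_open V) (C : sec V) c :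
  (forall p h, lrep (sval C p h) (c, hone R)) ->
  forall q Vq, lrep (sval (msh m hV C) q Vq) (phi c, hone H).
Proof.
  intros Cc q Vq.
  assert (rs : restricts (constsec hdR c) C)
    by (intros p h h'; exact (loc_eq hdR (Cc p h') (constsec_const hdR c p h))).
  rewrite (proj1 (proj2 hm) _ V (@open_setT R) hV (fun _ _ => I) _ _ rs q I Vq).
  rewrite msh_constsec. apply constsec_const.
Qed.

(* On [V], [a0/f0 = (a0/1) (1/f0)] and [(f0/1) (1/f0) = 1]; the homomorphism [msh]
   sends the constants [c/1] to [phi c/1], which pins down the image of [1/f0]. *)
Lemma msh_secfrac (V : Spec R -> Prop) (hV : is_open V) (a0 f0 : R) nf q (Vq : V (mf m q)) :
  lrep (sval (msh m hV (@secfrac R hdR V hV a0 f0 nf)) q Vq) (phi a0, phi f0).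
Proof.
  set (n1 := fun p (_ : V p) => @pt1 R p).
  set (A := @secfrac R hdR V hV a0 _ n1).
  set (F := @secfrac R hdR V hV f0 _ n1).
  set (Inv := @secfrac R hdR V hV (hone R) f0 nf).
  set (O := @secfrac R hdR V hV (hone R) _ n1).
  destruct (proj1 hm V hV) as [_ [mmul [_ mone]]].
  assert (AI : forall p h, loc_mul (sval A p h) (sval Inv p h)
                             (sval (@secfrac R hdR V hV a0 f0 nf) p h)).
  { intros p h. apply (proj2 (loc_mulE hdR _ (secfrac_rep hdR hV a0 n1 h)
                                  (secfrac_rep hdR hV (hone R) nf h))); simpl.
    rewrite hmulr1, hmul_1l. exact (secfrac_rep hdR hV a0 nf h). }
  assert (FI : forall p h, loc_mul (sval F p h) (sval Inv p h) (sval O p h)).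
  { intros p h. apply (proj2 (loc_mulE hdR _ (secfrac_rep hdR hV f0 n1 h)
                                  (secfrac_rep hdR hV (hone R) nf h))); simpl.
    apply (proj2 (lrep_iff hdR _ (secfrac_rep hdR hV (hone R) n1 h))).
    unfold frac_eq; simpl. rewrite ?hmulr1, ?hmul_1l.
    repeat split; [apply pt1|exact (nf p h)]. }
  assert (Oone : forall p h, loc_one (sval O p h)) by (intros p h; apply secfrac_rep).
  pose proof (mmul _ _ _ AI q Vq) as mAI. pose proof (mmul _ _ _ FI q Vq) as mFI.
  pose proof (mone _ Oone q Vq) as mO. simpl in mAI, mFI, mO.
  destruct (lrep_exists hdH (sval (msh m hV Inv) q Vq)) as [x [t mI]].
  pose proof (proj1 (loc_mulE hdH _ (msh_const_rep hV (C := A) (fun p h => secfrac_rep hdR hV a0 n1 h) Vq) mI) mAI)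
    as k1.
  pose proof (proj1 (loc_mulE hdH _ (msh_const_rep hV (C := F) (fun p h => secfrac_rep hdR hV f0 n1 h) Vq) mI) mFI)
    as k2.
  destruct (lrep_frac_eq hdH mO k2) as [_ [_ et]]. simpl in k1, et.
  rewrite !hmul_1l, hmulr1 in et.
  apply (proj2 (lrep_iff hdH _ k1)).
  split; [rewrite hmul_1l; exact (lrep_den hdH mI)|].
  split; [intro qf0; exact (nf _ Vq (proj2 (mf_comap q f0) qf0))|]. simpl.
  rewrite hmul_1l, et, hmulAC. symmetry. apply hmul_assoc.
Qed.

Lemma msh_rep (U : Spec R -> Prop) (hU : is_open U) (s : sec U) q (h : U (mf m q)) a f :
  lrep (sval s (mf m q) h) (a, f) -> lrep (sval (msh m hU s) q h) (phi a, phi f).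
Proof.
  intro sa.
  destruct (proj2_sig s (mf m q) h) as [V [hV [Vq [VU [a0 [f0 Hs]]]]]].
  assert (nf : forall p, V p -> ~ pt p f0) by (intros p Vp; exact (proj1 (Hs p (VU p Vp) Vp))).
  assert (rs : restricts s (@secfrac R hdR V hV a0 f0 nf))
    by (intros p Up Vp; exact (loc_eq hdR (secfrac_rep hdR hV a0 nf Vp) (proj2 (Hs p Up Vp)))).
  rewrite <- (proj1 (proj2 hm) U V hU hV VU s _ rs q h Vq).
  apply (proj2 (lrep_iff hdH _ (msh_secfrac hV a0 nf Vq))).
  exact (frac_eq_map hphi (mf_comap q) (lrep_frac_eq hdR (proj2 (Hs _ h Vq)) sa)).
Qed.

End HomOfMorphism.

Lemma lhs_morph_unique (R H : hyperring) (hdR : hyperdomain R) (hdH : hyperdomain H)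
  (phi : R -> H) (hphi : is_hom (rstr_of R) (rstr_of H) phi) (m1 m2 : lhs_morph R H) :
  is_morphism m1 -> global_hom m1 phi -> is_morphism m2 -> global_hom m2 phi -> m1 = m2.
Proof.
  intros hm1 hg1 hm2 hg2.
  assert (E : mf m1 = mf m2).
  { apply functional_extensionality; intro q. apply spec_eq, pred_ext. intro r.
    rewrite (mf_comap hdR hdH hm1 hg1), (mf_comap hdR hdH hm2 hg2). reflexivity. }
  pose proof (msh_rep hdR hdH hphi hm1 hg1) as rep1.
  pose proof (msh_rep hdR hdH hphi hm2 hg2) as rep2.
  clear hm1 hg1 hm2 hg2.
  destruct m1 as [f c1 s1], m2 as [f' c2 s2]. simpl in *. subst f'.
  assert (c1 = c2) as <- by apply proof_irrelevance.
  f_equal. apply functional_extensionality_dep; intro U.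
  apply functional_extensionality_dep; intro hU. apply functional_extensionality; intro s.
  apply sec_ext. intros q h.
  destruct (lrep_exists hdR (sval s (f q) h)) as [a [t sa]].
  exact (loc_eq hdH (rep1 _ _ _ _ _ _ _ sa) (rep2 _ _ _ _ _ _ _ sa)).
Qed.

Section GlobalSectionsHom.
Variables R H : hyperring.
Hypothesis hdR : hyperdomain R.
Hypothesis hdH : hyperdomain H.
Variable m : lhs_morph R H.

Definition gsec_hom (r : R) : H :=
  proj1_sig (constructive_indefinite_description _
    (global_sec_const hdH (msh m (@open_setT R) (constsec hdR r)))).

Lemma gsec_homP r : is_const_sec (gsec_hom r) (msh m (@open_setT R) (constsec hdR r)).
Proof. unfold gsec_hom. destruct (constructive_indefinite_description _ _) as [x hx]. exact hx. Qed.

Lemma gsec_hom_global : global_hom m gsec_hom.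
Proof.
  intros hT r s s' sr s'r.
  rewrite (const_sec_unique hdR sr), (proof_irrelevance _ hT (@open_setT R)).
  apply sec_ext. intros q h. exact (loc_eq hdH (gsec_homP r q h) (s'r q h)).
Qed.

Lemma global_hom_unique phi : global_hom m phi -> phi = gsec_hom.
Proof.
  intro hg. apply functional_extensionality; intro r.
  pose proof (gsec_homP r (generic_point hdH) I) as k.
  rewrite (hg (@open_setT R) r _ _ (constsec_const hdR r) (constsec_const hdH (phi r))) in k.
  exact (proj1 (frac_eq_const _ _ _)
           (lrep_frac_eq hdH (constsec_const hdH (phi r) _ I) k)).
Qed.

Hypothesis hm : is_morphism m.

Lemma gsec_hom_is_hom : is_hom (rstr_of R) (rstr_of H) gsec_hom.
Proof.
  destruct (proj1 hm (fun _ => True) (@open_setT R)) as [madd [mmul [mzero mone]]].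
  set (g := generic_point hdH).
  assert (C : forall x p h, lrep (sval (constsec hdR x) p h) (x, hone R))
    by (intros; apply constsec_const).
  split; [|split; [|split]]; simpl.
  - intros x y z xyz.
    assert (A : forall p h, loc_add (sval (constsec hdR x) p h) (sval (constsec hdR y) p h)
                                    (sval (constsec hdR z) p h))
      by (intros p h; exact (proj2 (loc_add_constE hdR (C x p h) (C y p h) (C z p h)) xyz)).
    exact (proj1 (loc_add_constE hdH (gsec_homP x g I) (gsec_homP y g I) (gsec_homP z g I))
             (madd _ _ _ A g I)).
  - intros x y z ->.
    assert (M : forall p h, loc_mul (sval (constsec hdR x) p h) (sval (constsec hdR y) p h)
                                    (sval (constsec hdR (x ** y)) p h))
      by (intros p h; exact (proj2 (loc_mul_constE hdR (C x p h) (C y p h) (C _ p h)) eq_refl)).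
    exact (proj1 (loc_mul_constE hdH (gsec_homP x g I) (gsec_homP y g I)
                    (gsec_homP (x ** y) g I)) (mmul _ _ _ M g I)).
  - intros z ->.
    pose proof (mzero _ (fun p h => C (hzero R) p h) g I) as Z.
    exact (eq_sym (proj1 (frac_eq_const _ _ _) (lrep_frac_eq hdH Z (gsec_homP _ g I)))).
  - intros z ->.
    pose proof (mone _ (fun p h => C (hone R) p h) g I) as O.
    exact (eq_sym (proj1 (frac_eq_const _ _ _) (lrep_frac_eq hdH O (gsec_homP _ g I)))).
Qed.

End GlobalSectionsHom.

Theorem proposition4p31 (R H : hyperring) :
  hyperdomain R -> hyperdomain H ->
  (* every homomorphism phi : R -> H comes from a unique morphism
     (Spec H, O_Y) -> (Spec R, O_X) via global sections ... *)
  (forall phi : R -> H, is_hom (rstr_of R) (rstr_of H) phi ->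
     (exists! m : lhs_morph R H, is_morphism m /\ global_hom m phi) /\
     (* ... whose underlying map is q |-> phi^{-1}(q) *)
     (forall m : lhs_morph R H, is_morphism m -> global_hom m phi ->
        forall q : Spec H, pt (mf m q) = (fun r => pt q (phi r)))) /\
  (* every morphism induces a unique homomorphism on global sections *)
  (forall m : lhs_morph R H, is_morphism m ->
     exists! phi : R -> H, is_hom (rstr_of R) (rstr_of H) phi /\ global_hom m phi).
Proof.
  intros hdR hdH. split.
  - intros phi hphi. split.
    + exists (spec_morph hdR hdH hphi).
      split; [split; [apply spec_morph_is_morphism|apply spec_morph_global]|].
      intros m [hm hg].
      exact (lhs_morph_unique hdR hdH hphi (spec_morph_is_morphism hdR hdH hphi)
               (spec_morph_global hdR hdH hphi) hm hg).
    + intros m hm hg q. apply pred_ext, (mf_comap hdR hdH hm hg).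
  - intros m hm. exists (gsec_hom hdR hdH m).
    split; [split; [exact (gsec_hom_is_hom hdR hdH hm)|apply gsec_hom_global]|].
    intros phi [_ hg]. exact (eq_sym (global_hom_unique hdR hdH hg)).
Qed.
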